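(* Let $n$ be a positive even integer and let $A\in\mathbb{M}_n(\mathbb{F}_3)$ be a non-derogatory matrix with $\operatorname{Trace}(A)=0$. Then there exists $M\in\mathbb{M}_n(\mathbb{F}_3)$ with $M^2=0$ such that $A+M$ is diagonalizable over $\mathbb{F}_3$.
   Context: $\mathbb{F}_3$ is the field with three elements. A square matrix is non-derogatory if its minimal polynomial equals its characteristic polynomial. A matrix $X\in\mathbb{M}_n(\mathbb{F}_3)$ is diagonalizable if there is an invertible $U\in\mathbb{M}_n(\mathbb{F}_3)$ with $U^{-1}XU$ diagonal. *)

From mathcomp Require Import all_boot all_order all_algebra.
Set Implicit Arguments. Unset Strict Implicit. Unset Printing Implicit Defensive.
Import GRing.Theory.
Local Open Scope ring_scope.

(* A square matrix is non-derogatory iff its minimal polynomial equals its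
   characteristic polynomial. (mxminpoly needs size m.+1.) *)
Definition nonderogatory (F : fieldType) (m : nat) (A : 'M[F]_m.+1) : Prop :=
  mxminpoly A = char_poly A.

Definition diagonalizable_over (F : fieldType) (n : nat) (X : 'M[F]_n) : Prop :=
  exists U : 'M[F]_n, U \in unitmx /\ is_diag_mx (invmx U *m X *m U).

From mathcomp Require Import all_boot all_order all_algebra.
From mathcomp Require Import ring.
From Stdlib Require Import Classical_Prop.
Set Implicit Arguments. Unset Strict Implicit. Unset Printing Implicit Defensive.
Import GRing.Theory.
Local Open Scope ring_scope.

(* Let n = 2k. A non-derogatory A has a cyclic vector v, i.e. one whose
   annihilator in F[X] is the minimal polynomial of A, of degree n. With
   Q_j = \prod_(i < j) X (X - y_i), the rows v Q_j(A), v Q_j(A) A (j < k)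
   form a basis in which A becomes [[0, 1], [P, Y]], where row j of Y is
   y_j e_j for j < k - 1; the last diagonal entry of Y is then forced by
   Trace A = 0 to be -(y_0 + ... + y_(k-2)). Choosing every y_j different
   from it makes Y^3 = Y over F_3. Then M = [[0, 0], [1 - Y^2 - P, 0]]
   squares to 0 and D = A + M = [[0, 1], [1 - Y^2, Y]] satisfies D^3 = D,
   so D is annihilated by X (X - 1) (X + 1) and is diagonalizable. *)

Section PolyFactor.
Variable F : fieldType.

Lemma exists_irreducible_factor (p : {poly F}) :
  (1 < size p)%N -> exists2 r, irreducible_poly r & r %| p.
Proof.
have [n] := ubnP (size p); elim: n p => // n IH p /ltnSE lt_p_n p_gt1.
apply: NNPP => no_irr; apply no_irr; exists p => //; split=> // q q_neq1 qp.
apply: NNPP => Nqp.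
have p0 : p != 0 by rewrite -size_poly_gt0 ltnW.
have q0 : q != 0 by apply: contraNneq p0 => q0; rewrite -dvd0p -q0.
have lt_q_p : (size q < size p)%N.
  by rewrite ltn_neqAle dvdp_leq // andbT dvdp_size_eqp //; apply/negP.
have q_gt1 : (1 < size q)%N.
  by move: q_neq1 q0; rewrite -size_poly_gt0; case: (size q) => [|[|]].
have [r irr_r rq] := IH q (leq_trans lt_q_p lt_p_n) q_gt1.
by apply: no_irr; exists r => //; apply: dvdp_trans rq qp.
Qed.

Lemma factor_max_power (r a : {poly F}) : a != 0 -> (1 < size r)%N ->
  exists e c, a = r ^+ e * c /\ ~~ (r %| c).
Proof.
move=> + r_gt1; have [n] := ubnP (size a); elim: n a => // n IH a /ltnSE lt_a_n a0.
have [/dvdpP [b Dab]|Nra] := boolP (r %| a); last by exists 0%N, a; rewrite expr0 mul1r.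
have b0 : b != 0 by apply: contraNneq a0 => b0; rewrite Dab b0 mul0r.
have r0 : r != 0 by rewrite -size_poly_gt0 ltnW.
have lt_b_a : (size b < size a)%N.
  rewrite Dab size_mul //.
  by case: (size r) r_gt1 => [|[|s]] // _; rewrite !addnS /= ltnS leq_addr.
have [e [c [Dbc Nrc]]] := IH b (leq_trans lt_b_a lt_a_n) b0.
by exists e.+1, c; rewrite Dab Dbc exprSr mulrAC.
Qed.
End PolyFactor.

Section CyclicVector.
Variables (F : fieldType) (n : nat) (A : 'M[F]_n.+1).
Local Notation hA := (horner_mx A).
Local Notation mA := (mxminpoly A).

Definition is_local_minpoly (v : 'rV_n.+1) (p : {poly F}) :=
  forall q, (v *m hA q == 0) = (p %| q).

Lemma mulmx_horner_mxM (u : 'rV_n.+1) p q : u *m hA (p * q) = u *m hA p *m hA q.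
Proof. by rewrite rmorphM -mulmxE mulmxA. Qed.

Lemma mulmx_horner_mxMX (u : 'rV_n.+1) p : u *m hA p *m A = u *m hA (p * 'X).
Proof. by rewrite mulmx_horner_mxM horner_mx_X. Qed.

Lemma mulmx_horner_mx_dvdp (u : 'rV_n.+1) p q :
  u *m hA p = 0 -> p %| q -> u *m hA q = 0.
Proof. by move=> up /dvdpP [c ->]; rewrite mulrC mulmx_horner_mxM up mul0mx. Qed.

Lemma mulmx_horner_mx_coprime (u : 'rV_n.+1) p q s : coprimep p q ->
  u *m hA (p * s) = 0 -> u *m hA (q * s) = 0 -> u *m hA s = 0.
Proof.
move=> /Bezout_eq1_coprimepP [[a b] /= Dab] ups uqs.
rewrite -[s]mul1r -Dab mulrDl rmorphD /= mulmxDr -!mulrA.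
by rewrite (mulmx_horner_mx_dvdp ups (dvdp_mulIr a _))
  (mulmx_horner_mx_dvdp uqs (dvdp_mulIr b _)) addr0.
Qed.

Lemma is_local_minpolyD (u w : 'rV_n.+1) a b : coprimep a b ->
  is_local_minpoly u a -> is_local_minpoly w b -> is_local_minpoly (u + w) (a * b).
Proof.
move=> co_ab ua wb q; rewrite Gauss_dvdp // -ua -wb.
apply/idP/idP => [/eqP uwq | /andP [/eqP uq /eqP wq]].
  2: by rewrite mulmxDl uq wq addr0.
have uq : u *m hA q = 0.
  apply: (mulmx_horner_mx_coprime co_ab); first by apply/eqP; rewrite ua dvdp_mulIl.
  have wbq : w *m hA (b * q) = 0 by apply/eqP; rewrite wb dvdp_mulIl.
  by rewrite -[u](addrK w) mulmxBl wbq subr0 mulrC mulmx_horner_mxM uwq mul0mx.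
rewrite uq eqxx /=; apply/eqP.
by rewrite -[w](addKr u) mulmxDl mulNmx uq uwq oppr0 addr0.
Qed.

Lemma is_local_minpoly_irr_power r e :
  irreducible_poly r -> r ^+ e %| mA -> exists v, is_local_minpoly v (r ^+ e).
Proof.
case: e => [_ _|e irr_r /dvdpP [c Dc]]; first by exists 0 => q; rewrite mul0mx eqxx dvd1p.
have r0 := irredp_neq0 irr_r.
have c0 : c != 0.
  by apply: contraNneq (monic_neq0 (mxminpoly_monic A)) => c0; rewrite Dc c0 mul0r.
have hA_cre : hA (c * r ^+ e) != 0.
  apply/negP => /eqP /mxminpoly_min.
  rewrite Dc exprSr mulrA -[X in _ %| X]mulr1 dvdp_mul2l ?mulf_neq0 ?expf_neq0 //.
  by rewrite dvdp1 gtn_eqF // irr_r.1.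
(* The witness is w c(A), where w c(A) r(A)^e != 0: if q = r^j q' with q'
   coprime to r kills it, then so does r^j, forcing j > e. *)
have /rowV0Pn [_ /submxP [w ->] w0] := hA_cre.
exists (w *m hA c) => q; apply/idP/idP => [/eqP vq|]; last first.
  move=> /(dvdp_mul (dvdpp c)) dvd_mq; apply/eqP; rewrite -mulmx_horner_mxM.
  by apply: mulmx_horner_mx_dvdp dvd_mq; rewrite -Dc mx_root_minpoly mulmx0.
apply: contraLR w0 => Ndvd; apply/negPn/eqP; rewrite mulmx_horner_mxM.
have q0 : q != 0 by apply: contraNneq Ndvd => ->; rewrite dvdp0.
have [j [q' [Dq Nrq']]] := factor_max_power q0 irr_r.1.
have le_j_e : (j <= e)%N.
  by rewrite leqNgt; apply: contra Ndvd => le_ej; rewrite Dq dvdp_mulr // dvdp_exp2l.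
suff vrj : w *m hA c *m hA (r ^+ j) = 0.
  by apply: mulmx_horner_mx_dvdp vrj _; rewrite dvdp_exp2l.
apply: (@mulmx_horner_mx_coprime _ (r ^+ (e.+1 - j)) q').
- by apply: coprimep_expl; rewrite irreducible_poly_coprime.
- by rewrite -exprD subnK 1?ltnW // -mulmx_horner_mxM -Dc mx_root_minpoly mulmx0.
- by rewrite mulrC -Dq.
Qed.

Lemma is_local_minpoly_dvd a : a %| mA -> exists v, is_local_minpoly v a.
Proof.
have [k] := ubnP (size a); elim: k a => // k IH a /ltnSE lt_a_k a_mA.
have a0 : a != 0.
  by apply: contraTneq a_mA => ->; rewrite dvd0p monic_neq0 ?mxminpoly_monic.
have [a_le1 | a_gt1] := leqP (size a) 1.
  have /eqp_dvdl a1 : a %= 1 by rewrite -size_poly_eq1 eqn_leq a_le1 size_poly_gt0.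
  by exists 0 => q; rewrite mul0mx eqxx a1 dvd1p.
have [r irr_r r_a] := exists_irreducible_factor a_gt1.
have [e [c [Da Nrc]]] := factor_max_power a0 irr_r.1.
have c_a : c %| a by rewrite Da dvdp_mull.
have lt_c_a : (size c < size a)%N.
  rewrite ltn_neqAle dvdp_leq // andbT dvdp_size_eqp //.
  by apply: contra Nrc => /andP [_ a_c]; apply: dvdp_trans r_a a_c.
have re_a : r ^+ e %| a by rewrite Da dvdp_mulr.
have [u ua] := is_local_minpoly_irr_power irr_r (dvdp_trans re_a a_mA).
have [w wc] := IH c (leq_trans lt_c_a lt_a_k) (dvdp_trans c_a a_mA).
exists (u + w); rewrite Da; apply: is_local_minpolyD ua wc.
by apply: coprimep_expl; rewrite irreducible_poly_coprime.
Qed.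

Lemma cyclic_vector : exists v, is_local_minpoly v mA.
Proof. exact: is_local_minpoly_dvd. Qed.

End CyclicVector.

Section DoubleDegree.
Variables (F : fieldType) (p : nat -> {poly F}).
Hypothesis size_p : forall j, size (p j) = (j.*2).+1.

Lemma size_sum_double_degree k (a b : nat -> F) :
  (size (\sum_(j < k) (a j *: p j + b j *: (p j * 'X)))%R <= k.*2)%N.
Proof.
elim: k => [|k IH]; first by rewrite big_ord0 size_poly0.
rewrite big_ord_recr /= (leq_trans (size_polyD _ _)) // geq_max.
rewrite (leq_trans IH) ?leq_double //= (leq_trans (size_polyD _ _)) // geq_max.
have p0 : p k != 0 by rewrite -size_poly_gt0 size_p.
by rewrite !(leq_trans (size_scale_leq _ _)) // ?size_mulX // size_p doubleS.
Qed.

Lemma sum_double_degree_eq0 k (a b : nat -> F) :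
  \sum_(j < k) (a j *: p j + b j *: (p j * 'X)) = 0 ->
  forall j, (j < k)%N -> a j = 0 /\ b j = 0.
Proof.
elim: k => // k IH; rewrite big_ord_recr /= => sum0.
set s := \sum_(j < k) _ in sum0.
have s_hi i : (k.*2 <= i)%N -> s`_i = 0.
  by move=> le_i; rewrite nth_default // (leq_trans (size_sum_double_degree k a b)).
have lead_p : (p k)`_(k.*2) != 0.
  by rewrite -[k.*2]/(k.*2.+1.-1) -size_p -lead_coefE lead_coef_eq0 -size_poly_gt0 size_p.
have bk0 : b k = 0.
  have := congr1 (fun q : {poly F} => q`_(k.*2.+1)) sum0.
  rewrite !coefD !coefZ coefMX /= coef0 s_hi // [(p k)`__]nth_default ?size_p //.
  by rewrite mulr0 !add0r => /eqP; rewrite mulf_eq0 (negPf lead_p) orbF => /eqP.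
have ak0 : a k = 0.
  have := congr1 (fun q : {poly F} => q`_(k.*2)) sum0.
  rewrite !coefD !coefZ bk0 mul0r addr0 coef0 s_hi //.
  by rewrite add0r => /eqP; rewrite mulf_eq0 (negPf lead_p) orbF => /eqP.
move: sum0; rewrite ak0 bk0 !scale0r !addr0 => /IH {}IH j.
by rewrite ltnS leq_eqVlt => /predU1P [->|/IH].
Qed.
End DoubleDegree.

Section QPoly.
Variables (F : fieldType) (y : nat -> F).

Definition qpoly j : {poly F} := \prod_(i < j) ('X * ('X - (y i)%:P)).

Lemma qpolyS j : qpoly j.+1 = qpoly j * ('X * ('X - (y j)%:P)).
Proof. by rewrite /qpoly big_ord_recr. Qed.

Lemma qpoly_monic j : qpoly j \is monic.
Proof. by apply: monic_prod => i _; rewrite monicMl ?monicX ?monicXsubC. Qed.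

Lemma size_qpoly j : size (qpoly j) = (j.*2).+1.
Proof.
elim: j => [|j IH]; first by rewrite /qpoly big_ord0 size_poly1.
rewrite qpolyS size_Mmonic ?monic_neq0 ?qpoly_monic ?monicMl ?monicX ?monicXsubC //.
by rewrite IH mulrC size_mulX ?polyXsubC_eq0 // size_XsubC doubleS !addnS addn0.
Qed.
End QPoly.

Section QBasis.
Variables (F : fieldType) (K : nat) (A : 'M[F]_(K.+1 + K.+1)).
Variables (y : nat -> F) (v : 'rV[F]_(K.+1 + K.+1)).
Hypothesis v_free : forall q : {poly F},
  q != 0 -> (size q <= (K.+1).*2)%N -> v *m horner_mx A q != 0.
Local Notation hA := (horner_mx A).

Definition qbasis_even := \matrix_(j < K.+1) (v *m hA (qpoly y j)).
Definition qbasis := col_mx qbasis_even (qbasis_even *m A).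

Lemma row_qbasis_odd j : row j (qbasis_even *m A) = v *m hA (qpoly y j * 'X).
Proof. by rewrite row_mul rowK mulmx_horner_mxMX. Qed.

Lemma qbasis_unit : qbasis \in unitmx.
Proof.
rewrite -row_free_unit; apply: inj_row_free => x.
rewrite -[x]hsubmxK mul_row_col; move: (lsubmx x) (rsubmx x) => xl xr x0.
pose a j := xl 0 (inord j); pose b j := xr 0 (inord j).
pose p := \sum_(j < K.+1) (a j *: qpoly y j + b j *: (qpoly y j * 'X)).
have Dp : xl *m qbasis_even + xr *m (qbasis_even *m A) = v *m hA p.
  rewrite [xl *m _]mulmx_sum_row [xr *m _]mulmx_sum_row rmorph_sum mulmx_sumr.
  rewrite -big_split /=; apply: eq_bigr => j _.
  by rewrite rmorphD /= mulmxDr !linearZ /= rowK row_qbasis_odd /a /b inord_val.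
have p0 : p = 0.
  apply/eqP; apply: contraT => /v_free.
  by rewrite -Dp x0 eqxx => /(_ (size_sum_double_degree (size_qpoly y) _ a b)).
have ab0 := sum_double_degree_eq0 (size_qpoly y) p0.
suff [-> ->] : xl = 0 /\ xr = 0 by rewrite row_mx0.
split; apply/rowP => j; rewrite mxE.
  by have [+ _] := ab0 j (ltn_ord j); rewrite /a inord_val.
by have [_ +] := ab0 j (ltn_ord j); rewrite /b inord_val.
Qed.

Lemma qbasis_conj : exists P Y,
  qbasis *m A *m invmx qbasis = block_mx 0 1%:M P Y /\
  forall j : 'I_K.+1, (j < K)%N -> row j Y = y j *: delta_mx 0 j.
Proof.
set S := qbasis; set E := qbasis_even; set B := S *m A *m invmx S.
have [EV EAV] : E *m invmx S = row_mx 1%:M 0 /\ E *m A *m invmx S = row_mx 0 1%:M.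
  apply: eq_col_mx; rewrite -mul_col_mx mulmxV ?qbasis_unit //.
  by rewrite scalar_mx_block block_mxEv.
have DB : B = col_mx (row_mx 0 1%:M) (E *m A *m A *m invmx S).
  by rewrite /B /S /qbasis !mul_col_mx EAV.
exists (lsubmx (dsubmx B)), (rsubmx (dsubmx B)); split.
  by rewrite -[LHS]submxK /ulsubmx /ursubmx DB col_mxKu row_mxKl row_mxKr.
move=> j lt_jK; have lt_j1K : (j.+1 < K.+1)%N by [].
have rowEAA : row j (E *m A *m A) = row (inord j.+1) E + y j *: row j (E *m A).
  rewrite row_mul row_qbasis_odd rowK inordK // mulmx_horner_mxMX.
  have -> : qpoly y j * 'X * 'X = qpoly y j.+1 + y j *: (qpoly y j * 'X).
    by rewrite qpolyS -mul_polyC; ring.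
  by rewrite rmorphD /= linearZ /= mulmxDr scalemxAr.
have -> : row j (rsubmx (dsubmx B)) = rsubmx (row j (dsubmx B)).
  by apply/rowP => i; rewrite !mxE.
rewrite DB col_mxKd row_mul rowEAA mulmxDl -scalemxAl -!row_mul EV EAV.
by rewrite !row_row_mx !row0 !row1 scale_row_mx add_row_mx row_mxKr add0r.
Qed.
End QBasis.

Lemma mulmx_horner_eigen (R : comNzRingType) n (Y : 'M[R]_n.+1) (u : 'rV_n.+1) c p :
  u *m Y = c *: u -> u *m horner_mx Y p = p.[c] *: u.
Proof.
move=> uY; elim/poly_ind: p => [|p a IH].
  by rewrite rmorph0 mulmx0 horner0 scale0r.
rewrite rmorphD rmorphM /= horner_mx_X horner_mx_C mulmxDr -mulmxE mulmxA IH.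
by rewrite -scalemxAl uY scalerA mul_mx_scalar hornerMXaddC scalerDl.
Qed.

Lemma diagonalizable_over_cube_id (F : fieldType) n (X : 'M[F]_n) :
  (2%:R : F) != 0 -> X *m X *m X = X -> diagonalizable_over X.
Proof.
case: n X => [X _ _ | n X two0 X3].
  by exists 1%:M; rewrite unitmx1; split=> //; apply/is_diag_mxP => -[].
have : diagonalizable X.
  apply/diagonalizableP; exists [:: 0; 1; -1].
    rewrite /= !inE eq_sym oner_eq0 eq_sym oppr_eq0 oner_eq0 -subr_eq0 opprK.
    by rewrite -mulr2n two0.
  apply: mxminpoly_min.
  have -> : \prod_(x <- [:: 0; 1; -1]) ('X - x%:P) = 'X^3 - 'X :> {poly F}.
    by rewrite !big_cons big_nil polyC0 polyC1 polyCN; ring.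
  by rewrite rmorphB rmorphXn /= horner_mx_X !exprS expr0 mulr1 -!mulmxE mulmxA X3 subrr.
case=> Q Qu DQ; exists (invmx Q); split; first by rewrite unitmx_inv.
by move: DQ; rewrite invmxK /similar_to /conjmx pinvmxE.
Qed.

Lemma cube_F3 (x : 'F_3) : x ^+ 3 = x.
Proof. by case: x => [[|[|[|i]]] Hi]; apply/eqP. Qed.

Lemma root_quadratic_F3 (x t : 'F_3) :
  x != t -> ('X^2 + t%:P * 'X + (t%:P ^+ 2 - 1)).[x] = 0.
Proof.
rewrite !hornerE.
by case: x => [[|[|[|i]]] Hi]; case: t => [[|[|[|j]]] Hj] // _; apply/eqP.
Qed.

Lemma cube_id_of_eigenrows K (Y : 'M['F_3]_K.+1) (y : nat -> 'F_3) :
  (forall j : 'I_K.+1, (j < K)%N -> row j Y = y j *: delta_mx 0 j) ->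
  (forall j, (j < K)%N -> y j != Y ord_max ord_max) ->
  Y *m Y *m Y = Y.
Proof.
move=> rowY y_neq; set t := Y ord_max ord_max.
have eigY (j : 'I_K.+1) p : (j < K)%N ->
    delta_mx (0 : 'I_1) j *m horner_mx Y p = p.[y j] *: delta_mx 0 j.
  by move=> lt_jK; apply: mulmx_horner_eigen; rewrite -rowE rowY.
suff : horner_mx Y ('X^3 - 'X) = 0.
  rewrite rmorphB rmorphXn /= horner_mx_X => /eqP; rewrite subr_eq0 !exprS expr0 mulr1.
  by rewrite -!mulmxE mulmxA => /eqP.
have ltK (j : 'I_K.+1) : j != ord_max -> (j < K)%N.
  move=> j_max; rewrite ltn_neqAle -ltnS ltn_ord andbT.
  by apply: contra j_max => /eqP j_K; apply/eqP/val_inj.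
apply/row_matrixP => i; rewrite row0 rowE.
have [-> | /ltK lt_iK] := eqVneq i ord_max; last first.
  by rewrite eigY // !hornerE cube_F3 subrr scale0r.
(* X^3 - X = (X - t) g; the row e_max (Y - t) is supported on the rows e_j,
   j < K, and g kills them because y_j != t. *)
have -> : 'X^3 - 'X = ('X - t%:P) * ('X^2 + t%:P * 'X + (t%:P ^+ 2 - 1)).
  transitivity (('X - t%:P) * ('X^2 + t%:P * 'X + (t%:P ^+ 2 - 1)) + (t ^+ 3 - t)%:P).
    by rewrite polyCB polyC_exp; ring.
  by rewrite cube_F3 subrr addr0.
rewrite mulmx_horner_mxM; set w := delta_mx _ _ *m _.
rewrite (row_sum_delta w) mulmx_suml big1 // => j _.
have [-> | /ltK lt_jK] := eqVneq j ord_max.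
  rewrite /w rmorphB /= horner_mx_X horner_mx_C mulmxBr mul_mx_scalar -rowE.
  by rewrite !mxE !eqxx mulr1 subrr scale0r mul0mx.
by rewrite -scalemxAl eigY // root_quadratic_F3 ?y_neq // scale0r scaler0.
Qed.

(* The perturbation replaces P by 1 - Y^2, which makes
   D^2 = [[1 - Y^2, Y], [0, 1]] and hence D^3 = D. *)
Lemma block_cube_id_perturbation (R : pzRingType) k (P Y : 'M[R]_k) :
  Y *m Y *m Y = Y -> exists N : 'M_(k + k), N *m N = 0 /\
  let D := block_mx 0 1%:M P Y + N in D *m D *m D = D.
Proof.
move=> Y3; exists (block_mx 0 0 (1%:M - Y *m Y - P) 0); split.
  by rewrite mulmx_block !mulmx0 !mul0mx !addr0 block_mx0.
have YW : Y *m (1%:M - Y *m Y) = 0 by rewrite mulmxBr mulmx1 mulmxA Y3 subrr.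
rewrite /= add_block_mx !addr0 [P + _]addrC subrK.
rewrite !mulmx_block !mulmx0 !mul0mx !mul1mx !mulmx1 !add0r.
by rewrite YW subrK !mul1mx add0r.
Qed.

(* Constant weights 1 work unless -K = 1; then K = 2 in F_3, so the weights
   -1, 1, ..., 1 sum to K - 2 = 0, and none of them is 0. *)
Lemma exists_weights_avoiding_trace K : exists y : nat -> 'F_3,
  forall j, (j < K)%N -> y j != - \sum_(l < K) y l.
Proof.
have [NK1 | NK1] := eqVneq (- K%:R) (1 : 'F_3); last first.
  by exists (fun=> 1) => j _; rewrite sumr_const card_ord eq_sym.
case: K NK1 => [|K] NK1; first by move: NK1; rewrite oppr0.
exists (fun l => if l == 0%N then -1 else 1) => j _.
rewrite big_ord_recl /= (eq_bigr (fun=> 1)) // sumr_const card_ord.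
move: NK1; rewrite -[K.+1]addn1 natrD.
by case: (K%:R : 'F_3) => [[|[|[|i]]] ?]; case: (j == 0%N).
Qed.

Lemma mulmx_conj (F : fieldType) n (S : 'M[F]_n) : S \in unitmx ->
  forall X Y, invmx S *m X *m S *m (invmx S *m Y *m S) = invmx S *m (X *m Y) *m S.
Proof. by move=> Su X Y; rewrite -!mulmxA (mulmxA S) mulmxV // mul1mx. Qed.

Lemma nilpotent_perturbation_diagonalizable K (A : 'M['F_3]_(K.+1 + K.+1))
    (y : nat -> 'F_3) (v : 'rV_(K.+1 + K.+1)) :
  (forall q : {poly 'F_3},
    q != 0 -> (size q <= (K.+1).*2)%N -> v *m horner_mx A q != 0) ->
  (forall j, (j < K)%N -> y j != - \sum_(l < K) y l) ->
  \tr A = 0 -> exists M, M *m M = 0 /\ diagonalizable_over (A + M).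
Proof.
move=> v_free y_neq trA.
have Su := qbasis_unit y v_free; set S := qbasis A y v in Su *.
have [P [Y [DB rowY]]] := qbasis_conj y v_free; rewrite -/S in DB.
have trY : \tr Y = 0.
  have : \tr (S *m A *m invmx S) = \tr A by rewrite mxtrace_mulC mulmxA mulVmx // mul1mx.
  by rewrite DB mxtrace_block mxtrace0 add0r trA.
have Ymax : Y ord_max ord_max = - \sum_(l < K) y l.
  move/eqP: trY; rewrite /mxtrace big_ord_recr /= addrC addr_eq0 => /eqP ->.
  congr (- _); apply: eq_bigr => l _.
  have := congr1 (fun r : 'rV_K.+1 => r 0 (widen_ord (leqnSn K) l))
    (rowY (widen_ord (leqnSn K) l) (ltn_ord l)).
  by rewrite !mxE !eqxx mulr1.
have Y3 : Y *m Y *m Y = Y.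
  by apply: cube_id_of_eigenrows rowY _ => j; rewrite Ymax; apply: y_neq.
have [N [N2 D3]] := block_cube_id_perturbation P Y3.
exists (invmx S *m N *m S); split; first by rewrite (mulmx_conj Su) N2 mulmx0 mul0mx.
have -> : A + invmx S *m N *m S = invmx S *m (block_mx 0 1%:M P Y + N) *m S.
  by rewrite -DB mulmxDr mulmxDl -!mulmxA mulKmx // mulVmx // mulmx1.
by apply: diagonalizable_over_cube_id => //; rewrite !(mulmx_conj Su) D3.
Qed.

Theorem proposition3p1 (m : nat) (A : 'M['F_3]_m.+1) :
  ~~ odd m.+1 -> nonderogatory A -> \tr A = 0 ->
  exists M : 'M['F_3]_m.+1, M *m M = 0 /\ diagonalizable_over (A + M).
Proof.
move=> even_size nd trA.
have [K DK] : exists K, m = (K + K.+1)%N.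
  exists m./2; rewrite addnS addnn -[m in LHS]odd_double_half.
  by move: even_size; rewrite /= negbK => ->.
subst m; have [v vA] := cyclic_vector A.
have [y y_neq] := exists_weights_avoiding_trace K.
apply: (@nilpotent_perturbation_diagonalizable K A y v _ y_neq trA) => q q0 le_q.
rewrite vA; apply: contraL le_q => /(dvdp_leq q0).
by rewrite nd size_char_poly -ltnNge -addnn addSn.
Qed.
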